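(* Let $V=\{1,\dots,n\}$ and let $D,D'$ be self-adjoint $n\times n$ complex matrices, with associated weighted graphs $G$ and $G'$ on $V$, both connected. Suppose there are pairs $(i_1,j_1),\dots,(i_k,j_k)$ of distinct vertices such that the $2k$ vertices $i_1,j_1,\dots,i_k,j_k$ are pairwise distinct (the edges $\{i_s,j_s\}$ are pairwise unconnected), such that $D$ and $D'$ have the same entries except at the positions $(i_s,j_s)$ and $(j_s,i_s)$, and such that for each $s$ exactly one of $D_{i_sj_s}$, $D'_{i_sj_s}$ is zero and the other has modulus $1/w_s$ with $w_s\in(0,\infty)$ (so $G$ and $G'$ differ by addition or deletion of the edges $\{i_s,j_s\}$ of weights $w_s$). Let $x,y\in V$, let $d=d^D(x,y)$, $d'=d^{D'}(x,y)$, and put $$m=\max_{s=1,\dots,k}\frac{d^D(i_s,j_s)}{w_s},\qquad m'=\max_{s=1,\dots,k}\frac{d^{D'}(i_s,j_s)}{w_s}.$$ Then $$\frac{d}{1+m}\le d'\le (1+m')\,d.$$ In the particular case where $k=1$ and the single added/removed edge, of weight $w$, connects $x$ and $y$, one has $$\left|\frac{1}{d}-\frac{1}{d'}\right|\le\frac{1}{w}.$$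
   Context: For a self-adjoint $n\times n$ matrix $M$, the weighted graph associated with $M$ has vertex set $\{1,\dots,n\}$ and an edge $\{i,j\}$ ($i\neq j$) of weight $|M_{ij}|^{-1}$ whenever $M_{ij}\neq 0$. The noncommutative distance is $d^M(i,j)=\sup\{|a(i)-a(j)| : a\in\mathbb{C}^n,\ \|[M,\pi(a)]\|\le 1\}$, where $\pi(a)=\mathrm{diag}(a(1),\dots,a(n))$ and $\|\cdot\|$ is the operator norm. *)

From HB Require Import structures.
From mathcomp Require Import all_boot all_order all_algebra.
From mathcomp Require Import all_classical all_reals.
From mathcomp Require Export complex.
Set Implicit Arguments. Unset Strict Implicit. Unset Printing Implicit Defensive.
Import Order.TTheory GRing.Theory Num.Theory.
Local Open Scope ring_scope.
Local Open Scope classical_set_scope.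

Section NCDist.
Variables (R : realType) (n : nat).

Definition cmod (z : R[i]) : R := Normc.normc z.

Definition vnorm (v : 'cV[R[i]]_n) : R :=
  Num.sqrt (\sum_(p < n) cmod (v p ord0) ^+ 2).

Definition opnorm (A : 'M[R[i]]_n) : R :=
  sup [set vnorm (A *m v) | v in [set v : 'cV[R[i]]_n | vnorm v <= 1]].

Definition self_adjoint (M : 'M[R[i]]_n) : Prop :=
  forall p q, M q p = (M p q)^*.

Definition piv (a : 'rV[R[i]]_n) : 'M[R[i]]_n := diag_mx a.

Definition commut (M X : 'M[R[i]]_n) : 'M[R[i]]_n := M *m X - X *m M.

Definition ncdist (M : 'M[R[i]]_n) (p q : 'I_n) : R :=
  sup [set cmod (a ord0 p - a ord0 q) |
        a in [set a : 'rV[R[i]]_n | opnorm (commut M (piv a)) <= 1]].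

(* adjacency relation of the weighted graph associated with M
   (edge {p,q}, p != q, whenever M p q != 0; its weight is |M p q|^-1) *)
Definition adj (M : 'M[R[i]]_n) : rel 'I_n :=
  fun p q => (p != q) && (M p q != 0).

Definition graph_connected (M : 'M[R[i]]_n) : Prop :=
  forall p q : 'I_n, connect (adj M) p q.

End NCDist.

(* For a with ||[D, pi(a)]|| <= 1, the commutators of D and D' with pi(a) differ
   by the matrix F with entries (D' - D)_pq (a(q) - a(p)), supported on the
   positions (i_s, j_s) and (j_s, i_s).  The modified edges being pairwise
   disjoint, F has at most one nonzero entry in each row and each column, so
   ||F|| is bounded by its largest entry, |a(i_s) - a(j_s)| / w_s
   <= d^D(i_s, j_s) / w_s <= m.  Hence a / (1 + m) is admissible for D', which
   gives d <= (1 + m) d'; exchanging D and D' gives d' <= (1 + m') d.  When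
   k = 1 and the edge joins x and y, m = d / w and m' = d' / w, and the two
   bounds rearrange into |1/d - 1/d'| <= 1/w. *)

From HB Require Import structures.
From mathcomp Require Import all_boot all_order all_algebra.
From mathcomp Require Import all_classical all_reals.
From mathcomp Require Import complex.
From mathcomp Require Import ring.
Import Order.TTheory GRing.Theory Num.Theory.
Set Implicit Arguments. Unset Strict Implicit. Unset Printing Implicit Defensive.
Local Open Scope ring_scope.
Local Open Scope classical_set_scope.

Section ComplexModulus.
Variable R : realType.
Implicit Types x y z : R[i].

Lemma cmod_normC z : `|z| = ((cmod z)%:C)%C.
Proof. by []. Qed.

Lemma cmod_ge0 z : 0 <= cmod z.
Proof. by rewrite -ler0c -cmod_normC. Qed.

Lemma cmod0 : cmod (0 : R[i]) = 0.
Proof. exact: Normc.normc0. Qed.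

Lemma cmod1 : cmod (1 : R[i]) = 1.
Proof. exact: Normc.normc1. Qed.

Lemma cmodM x y : cmod (x * y) = cmod x * cmod y.
Proof. exact: Normc.normcM. Qed.

Lemma cmodD x y : cmod (x + y) <= cmod x + cmod y.
Proof. exact: le_normcD. Qed.

Lemma cmodN x : cmod (- x) = cmod x.
Proof. exact: normcN. Qed.

Lemma cmodB x y : cmod (x - y) = cmod (y - x).
Proof. by rewrite -opprB cmodN. Qed.

Lemma cmod_eq0 x : (cmod x == 0) = (x == 0).
Proof. by apply/eqP/eqP => [/Normc.eq0_normc|->] //; exact: cmod0. Qed.

Lemma cmodJ x : cmod (Num.conj x) = cmod x.
Proof. by apply: complexI; rewrite -!cmod_normC norm_conjC. Qed.

Lemma cmod_real (r : R) : cmod ((r%:C)%C) = `|r|.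
Proof. by rewrite /cmod /Normc.normc /= expr0n /= addr0 sqrtr_sqr. Qed.

Lemma cmod_sum (I : finType) (F : I -> R[i]) :
  cmod (\sum_i F i) <= \sum_i cmod (F i).
Proof.
rewrite -lecR -cmod_normC rmorph_sum /=.
by apply: le_trans (ler_norm_sum _ _ _) _; apply: ler_sum => i _.
Qed.

End ComplexModulus.

Lemma sqrD_le_weighted (R : realFieldType) (A B a b : R) : 0 < A -> 0 < B ->
  (a + b) ^+ 2 <= (A + B) * (a ^+ 2 / A + b ^+ 2 / B).
Proof.
move=> A_gt0 B_gt0; rewrite -subr_ge0.
have -> : (A + B) * (a ^+ 2 / A + b ^+ 2 / B) - (a + b) ^+ 2
          = (a * B - b * A) ^+ 2 / (A * B).
  by field; rewrite !gt_eqF.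
by rewrite divr_ge0 ?sqr_ge0 // mulr_ge0 // ltW.
Qed.

Section EuclideanNorm.
Variables (R : realType) (n : nat).
Implicit Types (u v : 'cV[R[i]]_n) (c : R[i]).

Lemma vnorm_ge0 v : 0 <= vnorm v.
Proof. exact: sqrtr_ge0. Qed.

Lemma vnorm_sqr v : vnorm v ^+ 2 = \sum_p cmod (v p ord0) ^+ 2.
Proof. by rewrite sqr_sqrtr // sumr_ge0 // => p _; rewrite sqr_ge0. Qed.

Lemma cmod_le_vnorm v p : cmod (v p ord0) <= vnorm v.
Proof.
rewrite -ler_sqr ?nnegrE ?cmod_ge0 ?vnorm_ge0 // vnorm_sqr (bigD1 p) //=.
by rewrite lerDl sumr_ge0 // => q _; rewrite sqr_ge0.
Qed.

Lemma vnorm0 : vnorm (0 : 'cV[R[i]]_n) = 0.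
Proof. by rewrite /vnorm big1 ?sqrtr0 // => p _; rewrite mxE cmod0 expr0n. Qed.

Lemma vnorm_eq0 v : vnorm v = 0 -> v = 0.
Proof.
move=> v0; apply/matrixP => p q; rewrite (ord1 q) mxE; apply/eqP.
by rewrite -cmod_eq0 eq_le cmod_ge0 andbT -v0 cmod_le_vnorm.
Qed.

Lemma vnorm_gt0 v : v != 0 -> 0 < vnorm v.
Proof.
move=> v_neq0; rewrite lt_def vnorm_ge0 andbT.
by apply: contra v_neq0 => /eqP/vnorm_eq0->.
Qed.

Lemma vnormZ c v : vnorm (c *: v) = cmod c * vnorm v.
Proof.
rewrite /vnorm -[cmod c]ger0_norm ?cmod_ge0 // -sqrtr_sqr -sqrtrM ?sqr_ge0 //.
by rewrite mulr_sumr; congr Num.sqrt; apply: eq_bigr => p _; rewrite mxE cmodM exprMn.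
Qed.

Lemma vnormD u v : vnorm (u + v) <= vnorm u + vnorm v.
Proof.
have [->|u_neq0] := eqVneq u 0; first by rewrite vnorm0 !add0r.
have [->|v_neq0] := eqVneq v 0; first by rewrite vnorm0 !addr0.
have A_gt0 := vnorm_gt0 u_neq0; have B_gt0 := vnorm_gt0 v_neq0.
rewrite -ler_sqr ?nnegrE ?addr_ge0 ?vnorm_ge0 // vnorm_sqr.
apply: (@le_trans _ _ (\sum_p (vnorm u + vnorm v) *
   (cmod (u p ord0) ^+ 2 / vnorm u + cmod (v p ord0) ^+ 2 / vnorm v))).
  apply: ler_sum => p _; apply: le_trans (sqrD_le_weighted _ _ A_gt0 B_gt0).
  by rewrite mxE ler_sqr ?nnegrE ?addr_ge0 ?cmod_ge0 // cmodD.
rewrite -mulr_sumr big_split /= -!mulr_suml -!vnorm_sqr.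
by rewrite !expr2 !mulfK ?gt_eqF.
Qed.

End EuclideanNorm.

Section OperatorNorm.
Variables (R : realType) (n : nat).
Implicit Types (A F : 'M[R[i]]_n) (v : 'cV[R[i]]_n).

Lemma opnorm_set_bounded A :
  has_ubound [set vnorm (A *m v) | v in [set v | vnorm v <= 1]].
Proof.
exists (Num.sqrt (\sum_p (\sum_q cmod (A p q)) ^+ 2)) => _ [v v_le1 <-].
apply: ler_wsqrtr; apply: ler_sum => p _.
rewrite ler_sqr ?nnegrE ?cmod_ge0 ?sumr_ge0 // => [|q _]; last exact: cmod_ge0.
rewrite mxE; apply: le_trans (cmod_sum _) _; apply: ler_sum => q _.
rewrite cmodM ler_piMr ?cmod_ge0 //.
exact: le_trans (cmod_le_vnorm _ _) v_le1.
Qed.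

Lemma opnorm_ub A v : vnorm v <= 1 -> vnorm (A *m v) <= opnorm A.
Proof. by move=> v_le1; apply: ub_le_sup (opnorm_set_bounded A) _ _; exists v. Qed.

Lemma opnorm_le A c :
  (forall v, vnorm v <= 1 -> vnorm (A *m v) <= c) -> opnorm A <= c.
Proof.
move=> Ac; apply: ge_sup; last by move=> _ [v v_le1 <-]; apply: Ac.
by exists (vnorm (A *m 0)), 0 => //=; rewrite vnorm0 ler01.
Qed.

Lemma opnormD A B : opnorm (A + B) <= opnorm A + opnorm B.
Proof.
apply: opnorm_le => v v_le1; rewrite mulmxDl.
by apply: le_trans (vnormD _ _) _; apply: lerD; apply: opnorm_ub.
Qed.

Lemma opnormZ c A : opnorm (c *: A) <= cmod c * opnorm A.
Proof.
apply: opnorm_le => v v_le1; rewrite -scalemxAl vnormZ.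
by rewrite ler_wpM2l ?cmod_ge0 ?opnorm_ub.
Qed.

Lemma cmod_le_opnorm A p q : cmod (A p q) <= opnorm A.
Proof.
have e_q1 : vnorm (delta_mx q 0 : 'cV[R[i]]_n) = 1.
  rewrite /vnorm (bigD1 q) //= big1 => [|p' /negbTE p'q].
    by rewrite mxE !eqxx andbT mulr1n addr0 cmod1 expr1n sqrtr1.
  by rewrite mxE p'q cmod0 expr0n.
have -> : A p q = col q A p ord0 by rewrite mxE.
by rewrite colE; apply: le_trans (cmod_le_vnorm _ _) (opnorm_ub _ _); rewrite e_q1.
Qed.

Lemma sparse_support (I : finType) (V : eqType) (F : I -> V) (x0 : V) (i0 : I) :
  (forall i j, F i != x0 -> F j != x0 -> i = j) ->
  exists i, forall j, j != i -> F j = x0.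
Proof.
move=> F_sparse; case: (pickP (fun i => F i != x0)) => [i Fi|F_x0].
  exists i => j; apply: contraNeq => Fj; exact/eqP/(F_sparse _ _ Fj Fi).
by exists i0 => j _; apply/eqP/negbFE/F_x0.
Qed.

Lemma opnorm_sparse F c : 0 <= c ->
  (forall p q1 q2, F p q1 != 0 -> F p q2 != 0 -> q1 = q2) ->
  (forall q p1 p2, F p1 q != 0 -> F p2 q != 0 -> p1 = p2) ->
  (forall p q, cmod (F p q) <= c) -> opnorm F <= c.
Proof.
move=> c_ge0 F_row F_col F_le; apply: opnorm_le => v v_le1.
apply: (@le_trans _ _ (c * vnorm v)); last by rewrite ler_piMr.
rewrite -ler_sqr ?nnegrE ?vnorm_ge0 ?mulr_ge0 ?vnorm_ge0 //.
rewrite exprMn !vnorm_sqr mulr_sumr.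
have rowE p : cmod ((F *m v) p ord0) ^+ 2
              = \sum_q cmod (F p q) ^+ 2 * cmod (v q ord0) ^+ 2.
  have [q0 Fq0] := sparse_support p (F_row p).
  rewrite mxE !(big_only1 q0) ?cmodM ?exprMn // => q q_neq0 _; rewrite Fq0 //.
    by rewrite cmod0 expr0n mul0r.
  by rewrite mul0r.
under eq_bigr do rewrite rowE.
rewrite exchange_big /=; apply: ler_sum => q _.
rewrite -mulr_suml ler_wpM2r ?sqr_ge0 //.
have [p0 Fp0] := sparse_support q (F_col q).
rewrite (big_only1 p0) // => [|p p_neq0 _]; last by rewrite Fp0 // cmod0 expr0n.
by rewrite ler_sqr ?nnegrE ?cmod_ge0.
Qed.

End OperatorNorm.

Section NoncommutativeDistance.
Variables (R : realType) (n : nat).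
Implicit Types (M : 'M[R[i]]_n) (a : 'rV[R[i]]_n).

Lemma commutE M a p q : commut M (piv a) p q = M p q * (a ord0 q - a ord0 p).
Proof. by rewrite /commut /piv mul_mx_diag mul_diag_mx !mxE; ring. Qed.

Lemma commutZ M c a : commut M (piv (c *: a)) = c *: commut M (piv a).
Proof. by apply/matrixP => p q; rewrite [RHS]mxE !commutE !mxE; ring. Qed.

Lemma opnorm_commut0 M : opnorm (commut M (piv 0)) <= 1.
Proof.
apply: opnorm_le => v _; rewrite (_ : commut M _ = 0) ?mul0mx ?vnorm0 ?ler01 //.
by apply/matrixP => p q; rewrite commutE !mxE subrr mulr0.
Qed.

Lemma cmod_entry_sub_le1 M a p q : opnorm (commut M (piv a)) <= 1 ->
  cmod (M p q) * cmod (a ord0 q - a ord0 p) <= 1.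
Proof. by move=> a_adm; rewrite -cmodM -commutE (le_trans (cmod_le_opnorm _ _ _)). Qed.

Lemma path_sub_bounded M p s : path (adj M) p s -> exists B, forall a,
  opnorm (commut M (piv a)) <= 1 -> cmod (a ord0 p - a ord0 (last p s)) <= B.
Proof.
elim: s p => [|r s IH] p /=; first by exists 0 => a _; rewrite subrr cmod0.
move=> /andP[/andP[_ Mpr_neq0] /IH[B r_B]].
have Mpr_gt0 : 0 < cmod (M p r) by rewrite lt_def cmod_eq0 Mpr_neq0 cmod_ge0.
exists ((cmod (M p r))^-1 + B) => a a_adm.
rewrite -[a ord0 p](subrK (a ord0 r)) -addrA.
apply: le_trans (cmodD _ _) (lerD _ (r_B a a_adm)).
by rewrite cmodB -(ler_pM2l Mpr_gt0) mulfV ?gt_eqF ?cmod_entry_sub_le1.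
Qed.

Lemma ncdist_set_bounded M p q : connect (adj M) p q -> has_ubound
  [set cmod (a ord0 p - a ord0 q) | a in [set a | opnorm (commut M (piv a)) <= 1]].
Proof.
move=> /connectP[s /path_sub_bounded[B s_B] ->].
by exists B => _ [a a_adm <-]; apply: s_B.
Qed.

Lemma ncdist_ub M p q a : connect (adj M) p q ->
  opnorm (commut M (piv a)) <= 1 -> cmod (a ord0 p - a ord0 q) <= ncdist M p q.
Proof. by move=> pq a_adm; apply: ub_le_sup (ncdist_set_bounded pq) _ _; exists a. Qed.

Lemma ncdist_le M p q c :
  (forall a, opnorm (commut M (piv a)) <= 1 -> cmod (a ord0 p - a ord0 q) <= c) ->
  ncdist M p q <= c.
Proof.
move=> Mc; apply: ge_sup; last by move=> _ [a a_adm <-]; apply: Mc.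
exists (cmod ((0 : 'rV_n) ord0 p - (0 : 'rV_n) ord0 q)), 0 => //.
exact: opnorm_commut0.
Qed.

Lemma ncdist_ge0 M p q : connect (adj M) p q -> 0 <= ncdist M p q.
Proof.
move=> pq; apply: le_trans (ncdist_ub pq (opnorm_commut0 M)).
by rewrite !mxE subrr cmod0.
Qed.

Lemma ncdistC M p q : ncdist M p q = ncdist M q p.
Proof.
rewrite /ncdist; congr sup; apply/seteqP.
by split=> _ [a a_adm <-]; exists a; rewrite // cmodB.
Qed.

Lemma ncdist_le_scale M M' c p q : 0 < c -> connect (adj M') p q ->
  (forall a, opnorm (commut M (piv a)) <= 1 -> opnorm (commut M' (piv a)) <= c) ->
  ncdist M p q <= c * ncdist M' p q.
Proof.
move=> c_gt0 pq MM'; apply: ncdist_le => a a_adm.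
rewrite -ler_pdivrMl //.
have c_inv_ge0 : 0 <= c^-1 by rewrite invr_ge0 ltW.
have := @ncdist_ub M' p q ((c^-1)%:C%C *: a) pq.
rewrite !mxE -mulrBr cmodM cmod_real ger0_norm // mulrC; apply.
rewrite commutZ (le_trans (opnormZ _ _)) // cmod_real ger0_norm //.
by rewrite ler_pdivrMl // mulr1 MM'.
Qed.

End NoncommutativeDistance.

Section EdgeModification.
Variables (R : realType) (n k : nat) (D D' : 'M[R[i]]_n).
Variables (ii jj : 'I_k -> 'I_n) (w : 'I_k -> R).
Hypotheses (D_adj : self_adjoint D) (D'_adj : self_adjoint D').
Hypothesis D_conn : graph_connected D.
Hypotheses (ii_inj : injective ii) (jj_inj : injective jj).
Hypothesis ii_neq_jj : forall s t, ii s != jj t.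
Hypothesis DD'_agree : forall p q : 'I_n,
  (forall s, ~ (p = ii s /\ q = jj s) /\ ~ (p = jj s /\ q = ii s)) -> D p q = D' p q.
Hypothesis DD'_edge : forall s, cmod (D' (ii s) (jj s) - D (ii s) (jj s)) <= (w s)^-1.

Definition on_edge s p q : bool :=
  ((p == ii s) && (q == jj s)) || ((p == jj s) && (q == ii s)).

Lemma on_edgeC s p q : on_edge s p q = on_edge s q p.
Proof. by rewrite /on_edge orbC !(andbC (p == _)). Qed.

Lemma on_edge_uniq s t p q q' : on_edge s p q -> on_edge t p q' -> q = q'.
Proof.
by rewrite /on_edge => /orP[] /andP[/eqP-> /eqP->] /orP[] /andP[/eqP st /eqP->];
  rewrite ?(ii_inj st) ?(jj_inj st) //; move: (ii_neq_jj s t) (ii_neq_jj t s);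
  rewrite st eqxx.
Qed.

Lemma support_diff_on_edge p q : D' p q != D p q -> exists s, on_edge s p q.
Proof.
move=> DD'pq; case: (pickP (fun s => on_edge s p q)) => [s|off]; first by exists s.
case/eqP: DD'pq; symmetry; apply: DD'_agree => s.
by split=> -[ep eq]; move: (off s); rewrite /on_edge ep eq !eqxx ?orbT.
Qed.

Lemma cmod_diff_on_edge s p q : on_edge s p q -> cmod (D' p q - D p q) <= (w s)^-1.
Proof.
case/orP=> /andP[/eqP-> /eqP->]; first exact: DD'_edge.
by rewrite D_adj D'_adj -rmorphB cmodJ.
Qed.

Local Notation m := (\big[Num.max/0]_(s < k) (ncdist D (ii s) (jj s) / w s)).

Lemma opnorm_commut_diff a : opnorm (commut D (piv a)) <= 1 ->
  opnorm (commut D' (piv a) - commut D (piv a)) <= m.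
Proof.
move=> a_adm; set F := _ - _.
have FE p q : F p q = (D' p q - D p q) * (a ord0 q - a ord0 p).
  by rewrite mulrBl -!commutE !mxE.
have F_on_edge p q : F p q != 0 -> exists s, on_edge s p q.
  move=> Fpq; apply: support_diff_on_edge; apply: contraTneq Fpq => DD'.
  by rewrite negbK FE DD' subrr mul0r.
apply: opnorm_sparse => [|p q1 q2|q p1 p2|p q]; first exact: bigmax_ge_id.
- by move=> /F_on_edge[s pq1] /F_on_edge[t pq2]; apply: on_edge_uniq pq1 pq2.
- move=> /F_on_edge[s p1q] /F_on_edge[t p2q].
  rewrite on_edgeC in p1q; rewrite on_edgeC in p2q; exact: on_edge_uniq p1q p2q.
have [->|/F_on_edge[s pq]] := eqVneq (F p q) 0; first by rewrite cmod0 bigmax_ge_id.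
apply: le_trans (le_bigmax _ _ s); rewrite FE cmodM mulrC.
apply: ler_pM; rewrite ?cmod_ge0 ?cmod_diff_on_edge //.
move: pq; rewrite /on_edge => /orP[] /andP[/eqP-> /eqP->]; first rewrite cmodB;
  exact: ncdist_ub (D_conn _ _) a_adm.
Qed.

Lemma ncdist_le_edge_change x y : connect (adj D') x y ->
  ncdist D x y <= (1 + m) * ncdist D' x y.
Proof.
move=> xy; apply: ncdist_le_scale => // [|a a_adm].
  by rewrite ltr_wpDr ?bigmax_ge_id.
have -> : commut D' (piv a) = commut D (piv a) + (commut D' (piv a) - commut D (piv a)).
  by rewrite addrC subrK.
apply: le_trans (opnormD _ _) _.
exact: lerD a_adm (opnorm_commut_diff a_adm).
Qed.

End EdgeModification.

Lemma bigmax_ord1 (R : realDomainType) (f : 'I_1 -> R) :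
  0 <= f ord0 -> \big[Num.max/0]_(s < 1) f s = f ord0.
Proof. by rewrite big_ord_recl big_ord0 => /max_idPl. Qed.

(* For positive d and d', the hypotheses say d'^-1 <= d^-1 + c and
   d^-1 <= d'^-1 + c; if one of them is 0 so is the other, and 0^-1 = 0. *)
Lemma normr_invB_le (R : realFieldType) (d d' c : R) : 0 <= d -> 0 <= d' -> 0 <= c ->
  d <= (1 + d * c) * d' -> d' <= (1 + d' * c) * d -> `|d^-1 - d'^-1| <= c.
Proof.
move=> + + c_ge0; wlog le_dd' : d d' / d <= d'.
  move=> sym d_ge0 d'_ge0 le_d le_d'; case: (leP d d') => [|/ltW] le; first exact: sym.
  by rewrite distrC; apply: sym.
move=> d_ge0 d'_ge0 _ le_d'.
have [d_eq0|d_neq0] := eqVneq d 0.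
  have d'_eq0 : d' = 0.
    by apply/le_anti; rewrite d'_ge0 andbT -(mulr0 (1 + d' * c)) -d_eq0.
  by rewrite d_eq0 d'_eq0 subrr normr0.
have d_gt0 : 0 < d by rewrite lt_def d_neq0.
have d'_gt0 : 0 < d' := lt_le_trans d_gt0 le_dd'.
rewrite ger0_norm ?subr_ge0 ?lef_pV2 ?posrE // -subr_ge0.
have -> : c - (d^-1 - d'^-1) = ((1 + d' * c) * d - d') / (d * d').
  by field; rewrite !gt_eqF.
by rewrite divr_ge0 ?subr_ge0 // mulr_ge0 // ltW.
Qed.

Theorem mainTheorem2 (R : realType) (n : nat) (D D' : 'M[R[i]]_n)
  (k : nat) (ii jj : 'I_k -> 'I_n) (w : 'I_k -> R) (x y : 'I_n) :
  self_adjoint D -> self_adjoint D' ->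
  graph_connected D -> graph_connected D' ->
  (* the 2k vertices i_1, j_1, ..., i_k, j_k are pairwise distinct *)
  injective ii -> injective jj -> (forall s t, ii s != jj t) ->
  (* D and D' agree outside the positions (i_s, j_s) and (j_s, i_s) *)
  (forall p q : 'I_n,
      (forall s, ~ (p = ii s /\ q = jj s) /\ ~ (p = jj s /\ q = ii s)) ->
      D p q = D' p q) ->
  (forall s, 0 < w s) ->
  (forall s,
      (D (ii s) (jj s) = 0 /\ cmod (D' (ii s) (jj s)) = (w s)^-1) \/
      (D' (ii s) (jj s) = 0 /\ cmod (D (ii s) (jj s)) = (w s)^-1)) ->
  let d := ncdist D x y in
  let d' := ncdist D' x y in
  let m := \big[Num.max/0]_(s < k) (ncdist D (ii s) (jj s) / w s) in
  let m' := \big[Num.max/0]_(s < k) (ncdist D' (ii s) (jj s) / w s) in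
  (d / (1 + m) <= d' /\ d' <= (1 + m') * d) /\
  ((k = 1)%N ->
   forall s : 'I_k,
     ((ii s == x) && (jj s == y)) || ((ii s == y) && (jj s == x)) ->
     `|d^-1 - d'^-1| <= (w s)^-1).
Proof.
move=> D_adj D'_adj D_conn D'_conn ii_inj jj_inj ii_jj agree w_gt0 edge_w d d' m m'.
have edge_diff s : cmod (D' (ii s) (jj s) - D (ii s) (jj s)) <= (w s)^-1.
  by case: (edge_w s) => -[-> <-]; rewrite ?subr0 ?sub0r ?cmodN.
have edge_diff' s : cmod (D (ii s) (jj s) - D' (ii s) (jj s)) <= (w s)^-1.
  by rewrite cmodB.
have le_d : d <= (1 + m) * d' := ncdist_le_edge_change D_adj D'_adj D_conn
  ii_inj jj_inj ii_jj agree edge_diff (D'_conn x y).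
have le_d' : d' <= (1 + m') * d := ncdist_le_edge_change D'_adj D_adj D'_conn
  ii_inj jj_inj ii_jj (fun p q pq => esym (agree p q pq)) edge_diff' (D_conn x y).
have one_plus_m_gt0 : 0 < 1 + m by rewrite ltr_wpDr ?bigmax_ge_id.
split; first split.
- rewrite ler_pdivrMr // [d' * _]mulrC; exact: le_d.
- exact: le_d'.
move=> k1 s; subst k; have -> : s = ord0 := ord1 s; move=> xy.
have bigmax_xy M : graph_connected M ->
    \big[Num.max/0]_(s < 1) (ncdist M (ii s) (jj s) / w s) = ncdist M x y / w ord0.
  move=> M_conn; rewrite bigmax_ord1; last first.
    exact: divr_ge0 (ncdist_ge0 (M_conn _ _)) (ltW (w_gt0 ord0)).
  by case/orP: xy => /andP[/eqP-> /eqP->]; rewrite // ncdistC.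
apply: normr_invB_le (ncdist_ge0 (D_conn x y)) (ncdist_ge0 (D'_conn x y)) _ _ _.
- by rewrite invr_ge0 ltW.
- rewrite -(bigmax_xy D D_conn); exact: le_d.
- rewrite -(bigmax_xy D' D'_conn); exact: le_d'.
Qed.
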